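(* Let $N\ge1$ and $(w,a,\theta)\in\widetilde{\mathcal{D}}_N$. There exists $\omega_0<0$ such that $M_{\mathrm{e}^{i\omega}}(w,a,\theta)\in\mathcal{D}_N$ for every real $\omega$ with $\omega_0\le\omega<0$.
   Context: $P_N=\{1,\dots,N\}$; vectors are functions on $P_N$, $v^{-1}[S]=\{\ell:v_\ell\in S\}$, $\mathrm{Tr}(v,\Lambda):=\sum_{\ell\in\Lambda}v_\ell$. $\mathcal{C}:=\{z:\mathrm{Re}(z)>0\text{ or }z\in i\mathbb{R}_{>0}\}$, $\mathcal{C}^\circ$ the open right half-plane. $\mathbb{D}_N:=\{(w,a,\theta)\in\mathbb{C}\times\mathbb{C}^N\times\mathbb{R}^N:a^{-1}[0]\subseteq\theta^{-1}[\mathbb{R}\smallsetminus\mathbb{Z}]\}$, $\pi(w,a,\theta):=w-\mathrm{Tr}(a,a^{-1}[-\mathcal{C}])$, $\widetilde{\mathcal{D}}_N:=\{\delta\in\mathbb{D}_N:\pi(\delta)\in\mathcal{C}\}$, $\mathcal{D}_N:=\{(w,a,\theta)\in\mathbb{D}_N:\pi(w,a,\theta)\in\mathcal{C}^\circ,\ a_\ell\notin i\mathbb{R}\smallsetminus\{0\}\ \forall\ell\}$. $M_\beta(w,a,\theta):=(\beta w,\beta a,\theta)$. *)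

From Stdlib Require Import Reals ZArith.
From Coquelicot Require Import Coquelicot.
Open Scope R_scope.

(* Vectors on P_N = {1,...,N} are modelled as functions nat -> _; only the
   values at indices 1..N are ever used. *)
Definition inPN (N l : nat) : Prop := (1 <= l <= N)%nat.

Definition inCC (z : C) : Prop := 0 < Re z \/ (Re z = 0 /\ 0 < Im z).
Definition inCCo (z : C) : Prop := 0 < Re z.
Definition inNegCC (z : C) : Prop := inCC (Copp z).

Definition inCCb (z : C) : bool :=
  if Rlt_dec 0 (Re z) then true
  else if Req_EM_T (Re z) 0 then (if Rlt_dec 0 (Im z) then true else false)
  else false.

Lemma inCCb_spec z : inCCb z = true <-> inCC z.
Proof.
  unfold inCCb, inCC.
  destruct (Rlt_dec 0 (Re z)) as [h|h]; [tauto|].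
  destruct (Req_EM_T (Re z) 0) as [e|e];
  destruct (Rlt_dec 0 (Im z)) as [g|g]; split; intros H;
    try discriminate; try tauto.
Qed.

Fixpoint TrNeg (a : nat -> C) (n : nat) : C :=
  match n with
  | O => RtoC 0
  | S k => Cplus (TrNeg a k) (if inCCb (Copp (a (S k))) then a (S k) else RtoC 0)
  end.

Definition piD (N : nat) (w : C) (a : nat -> C) : C := Cminus w (TrNeg a N).

Definition is_integer (x : R) : Prop := exists k : Z, x = IZR k.

Definition in_DD (N : nat) (w : C) (a : nat -> C) (theta : nat -> R) : Prop :=
  forall l, inPN N l -> a l = RtoC 0 -> ~ is_integer (theta l).

Definition in_Dtilde (N : nat) (w : C) (a : nat -> C) (theta : nat -> R) : Prop :=
  in_DD N w a theta /\ inCC (piD N w a).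

Definition in_iR_nonzero (z : C) : Prop := Re z = 0 /\ z <> RtoC 0.

Definition in_D (N : nat) (w : C) (a : nat -> C) (theta : nat -> R) : Prop :=
  in_DD N w a theta /\ inCCo (piD N w a) /\
  (forall l, inPN N l -> ~ in_iR_nonzero (a l)).

Definition cexpi (om : R) : C := (cos om, sin om).

(* M_β(w,a,θ) = (βw, βa, θ): we record the first two components *)
Definition M_w (beta w : C) : C := Cmult beta w.
Definition M_a (beta : C) (a : nat -> C) : nat -> C := fun l => Cmult beta (a l).

(** Multiplying by [e^{iω}] with small [ω < 0] rotates the plane slightly
    clockwise.  A point with nonzero real part keeps the sign of its real
    part (by continuity), and a point of [iR_{>0}] (resp. [iR_{<0}]) is moved
    into the open right (resp. left) half-plane.  Hence membership of every
    [a_l] in [-𝒞] is unchanged, no rotated [a_l] lies on [iR \ {0}], the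
    trace, and thus [π], is rotated along, and [π ∈ 𝒞] becomes
    [π ∈ 𝒞°].  Only finitely many points are involved, so a common [ω_0]
    exists. *)

From Stdlib Require Import Reals Lra Lia Psatz.
From Coquelicot Require Import Coquelicot.
Open Scope R_scope.

Lemma filter_forall_le {T : Type} {F : (T -> Prop) -> Prop} {FF : Filter F}
    (P : nat -> T -> Prop) (n : nat) :
  (forall l, (l <= n)%nat -> F (P l)) ->
  F (fun x => forall l, (l <= n)%nat -> P l x).
Proof.
  induction n as [|n IH]; intros HP.
  - apply (filter_imp (P 0%nat)); [|apply HP; lia].
    intros x Hx l Hl. replace l with 0%nat by lia. exact Hx.
  - apply (filter_imp (fun x => (forall l, (l <= n)%nat -> P l x) /\ P (S n) x)).
    + intros x [Hle HSn] l Hl.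
      destruct (Nat.eq_dec l (S n)) as [->|Hne]; [exact HSn|apply Hle; lia].
    + apply filter_and; [apply IH; intros l Hl|]; apply HP; lia.
Qed.

Lemma at_left_interval (P : R -> Prop) (x : R) :
  at_left x P -> exists x0, x0 < x /\ forall y, x0 <= y < x -> P y.
Proof.
  intros [eps Heps].
  exists (x - eps / 2). split; [destruct eps; simpl; lra|].
  intros y Hy. apply Heps; [|lra].
  destruct eps as [e He]; simpl in *.
  unfold ball; simpl; unfold AbsRing_ball, abs, minus, plus, opp; simpl.
  rewrite Rabs_left; lra.
Qed.

Lemma Re_cexpi_mult (om : R) (z : C) :
  Re (Cmult (cexpi om) z) = cos om * Re z - sin om * Im z.
Proof. destruct z; reflexivity. Qed.

Lemma cexpi_mult_eq_0 (om : R) (z : C) : Cmult (cexpi om) z = 0 -> z = 0.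
Proof.
  intros Hz.
  assert (Hnz : cexpi om <> 0).
  { intros Heq. injection Heq as Hc Hs.
    generalize (sin2_cos2 om). rewrite Hc, Hs. unfold Rsqr. lra. }
  rewrite <- (Cmult_1_l z), <- (Cinv_l _ Hnz), <- Cmult_assoc, Hz.
  apply Cmult_0_r.
Qed.

Lemma cexpi_mult_Re_pos (z : C) :
  0 < Re z -> at_left 0 (fun om => 0 < Re (Cmult (cexpi om) z)).
Proof.
  intros Hz.
  set (f om := cos om * Re z - sin om * Im z).
  assert (Hf0 : f 0 = Re z) by (unfold f; rewrite cos_0, sin_0; ring).
  assert (Hcont : continuous f 0).
  { apply (ex_derive_continuous (K := R_AbsRing) (V := R_NormedModule)).
    unfold f. auto_derive. exact I. }
  assert (Hloc : locally 0 (fun om => 0 < f om)).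
  { apply Hcont. rewrite Hf0. apply open_gt. exact Hz. }
  refine (filter_imp _ _ _ Hloc).
  intros om Hom _. rewrite Re_cexpi_mult. exact Hom.
Qed.

Lemma cexpi_mult_Re_imag (z : C) :
  Re z = 0 -> 0 < Im z -> at_left 0 (fun om => 0 < Re (Cmult (cexpi om) z)).
Proof.
  intros Hre Him.
  apply (locally_interval _ 0 (- PI) PI);
    [simpl; generalize PI_RGT_0; lra | exact PI_RGT_0|].
  intros om Hlo _ Hneg. simpl in Hlo.
  assert (Hsin : sin om < 0) by (apply sin_lt_0_var; lra).
  rewrite Re_cexpi_mult, Hre. nra.
Qed.

Lemma cexpi_mult_inCCo (z : C) :
  inCC z -> at_left 0 (fun om => inCCo (Cmult (cexpi om) z)).
Proof.
  intros [Hpos|[Hre Him]].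
  - exact (cexpi_mult_Re_pos z Hpos).
  - exact (cexpi_mult_Re_imag z Hre Him).
Qed.

Lemma inCC_trichotomy (z : C) : inCC z \/ inNegCC z \/ z = 0.
Proof.
  destruct z as [x y]. unfold inNegCC, inCC, Copp; simpl.
  destruct (Rtotal_order x 0) as [Hx|[->|Hx]]; [right; left; lra| |left; lra].
  destruct (Rtotal_order y 0) as [Hy|[->|Hy]]; [right; left; lra|auto|left; lra].
Qed.

Lemma inCC_not_inNegCC (z : C) : inCC z -> ~ inNegCC z.
Proof. unfold inNegCC, inCC; destruct z; simpl; lra. Qed.

Lemma Re_pos_not_inNegCC_not_iR (u : C) :
  0 < Re u -> ~ inNegCC u /\ ~ in_iR_nonzero u.
Proof.
  intros Hu. split; [apply inCC_not_inNegCC; left; exact Hu|].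
  intros [Hre _]. lra.
Qed.

Lemma Re_neg_inNegCC_not_iR (u : C) :
  Re u < 0 -> inNegCC u /\ ~ in_iR_nonzero u.
Proof.
  intros Hu. split; [left; destruct u; simpl in *; lra|].
  intros [Hre _]. lra.
Qed.

Lemma cexpi_mult_side (z : C) :
  at_left 0 (fun om => (inNegCC (Cmult (cexpi om) z) <-> inNegCC z) /\
                       ~ in_iR_nonzero (Cmult (cexpi om) z)).
Proof.
  destruct (inCC_trichotomy z) as [Hz|[Hz| ->]].
  - refine (filter_imp _ _ _ (cexpi_mult_inCCo z Hz)).
    intros om Hom. destruct (Re_pos_not_inNegCC_not_iR _ Hom) as [Hneg Hir].
    split; [|exact Hir].
    split; intros H; exfalso; [exact (Hneg H)|exact (inCC_not_inNegCC z Hz H)].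
  - refine (filter_imp _ _ _ (cexpi_mult_inCCo _ Hz)).
    intros om Hom.
    assert (Hre : Re (Cmult (cexpi om) z) < 0).
    { unfold inCCo in Hom. rewrite !Re_cexpi_mult in *. destruct z; simpl in *. lra. }
    destruct (Re_neg_inNegCC_not_iR _ Hre) as [Hneg Hir]. tauto.
  - apply filter_forall. intros om. rewrite Cmult_0_r.
    split; [reflexivity|]. intros [_ Hnz]. apply Hnz. reflexivity.
Qed.

Lemma inCCb_ext (z z' : C) : (inCC z <-> inCC z') -> inCCb z = inCCb z'.
Proof. intros H. apply Bool.eq_iff_eq_true. rewrite !inCCb_spec. exact H. Qed.

Lemma TrNeg_M_a (b : C) (a : nat -> C) (n : nat) :
  (forall l, (1 <= l <= n)%nat -> (inNegCC (Cmult b (a l)) <-> inNegCC (a l))) ->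
  TrNeg (M_a b a) n = Cmult b (TrNeg a n).
Proof.
  induction n as [|n IH]; intros Hside; simpl.
  - symmetry. apply Cmult_0_r.
  - rewrite IH by (intros l Hl; apply Hside; lia).
    unfold M_a. rewrite (inCCb_ext _ (Copp (a (S n)))) by (apply Hside; lia).
    destruct (inCCb (Copp (a (S n)))); ring.
Qed.

Lemma piD_M (b : C) (N : nat) (w : C) (a : nat -> C) :
  (forall l, inPN N l -> (inNegCC (Cmult b (a l)) <-> inNegCC (a l))) ->
  piD N (M_w b w) (M_a b a) = Cmult b (piD N w a).
Proof.
  intros Hside. unfold piD, M_w. rewrite TrNeg_M_a by exact Hside. ring.
Qed.

Theorem lemma6 (N : nat) (w : C) (a : nat -> C) (theta : nat -> R) :
  (1 <= N)%nat ->
  in_Dtilde N w a theta ->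
  exists om0 : R, om0 < 0 /\
    forall om : R, om0 <= om < 0 ->
      in_D N (M_w (cexpi om) w) (M_a (cexpi om) a) theta.
Proof.
  intros _ [HDD Hpi].
  assert (Hsides : at_left 0 (fun om => forall l, (l <= N)%nat ->
     (inNegCC (Cmult (cexpi om) (a l)) <-> inNegCC (a l)) /\
     ~ in_iR_nonzero (Cmult (cexpi om) (a l)))).
  { apply filter_forall_le. intros l _. apply cexpi_mult_side. }
  apply at_left_interval.
  refine (filter_imp _ _ _ (filter_and _ _ (cexpi_mult_inCCo _ Hpi) Hsides)).
  intros om [Hrot Hside]. split; [|split].
  - intros l Hl Hzero. apply (HDD l Hl), (cexpi_mult_eq_0 om), Hzero.
  - rewrite piD_M by (intros l Hl; apply Hside, Hl). exact Hrot.
  - intros l Hl. apply Hside, Hl.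
Qed.
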